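(* In the setting described in the context, with $\delta>0$, there exists an injection $\sigma\colon\mathrm{Rep}\,D(f_0)_O\hookrightarrow\mathrm{Rep}\,\mathcal{B}(\ker f^\delta)$ sending each element $((a,b),i)$ to an element of the form $([b,a+\delta),j)$, and such that every element $([c,d),l)$ of $\mathrm{Rep}\,\mathcal{B}(\ker f^\delta)$ not in the image of $\sigma$ has $c=0$ and $d=\delta$. There is an analogous injection $\sigma'\colon\mathrm{Rep}\,D(f'_0)_O\hookrightarrow\mathrm{Rep}\,\mathcal{B}(\ker f^{\delta\prime})$.
   Context: All vector spaces are over $\mathbb{Z}_2$. For a finite metric space $X$, $\mathrm{VR}_r(X)$ is the graph on $X$ with edges $[x,y]$ for $d^X(x,y)\le r$, and $\mathrm{PH}_0(X)$ is the persistence module $r\mapsto H_0(\mathrm{VR}_r(X))$ with structure maps $\rho_{rs}$ induced by inclusion; non-expansive maps induce persistence morphisms. Setting: $X\subseteq Z$, $X'\subseteq Z'$ finite metric spaces, $\varepsilon=d_{GH}((X,Z),(X',Z'))$. Fix a metric space $M$ and isometric embeddings $\gamma_Z,\gamma_{Z'}$ with $d^M_H(\gamma_Z(X),\gamma_{Z'}(X'))\le\varepsilon$, $d^M_H(\gamma_Z(Z),\gamma_{Z'}(Z'))\le\varepsilon$, and maps $\alpha^Z\colon Z\to Z'$, $\alpha^{Z'}\colon Z'\to Z$ with $\alpha^Z(X)\subseteq X'$, $\alpha^{Z'}(X')\subseteq X$, moving points by at most $\varepsilon$ in $M$; $\alpha^X,\alpha^{X'}$ are their restrictions. $Y=\{(x,x')\in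 X\times X':\alpha^X(x)=x'\text{ or }\alpha^{X'}(x')=x\}$; $Y^\delta$ ($Y^{\delta\prime}$) is $Y$ with distance $0$ between equal pairs and $\delta+d^X(x,y)$ (resp. $\delta+d^{X'}(x',y')$) between distinct pairs $(x,x'),(y,y')$. Projections $\pi\colon Y^\delta\to X$, $\pi'\colon Y^{\delta\prime}\to X'$ induce $h\colon\mathrm{PH}_0(Y^\delta)\to V=\mathrm{PH}_0(X)$, $h'\colon\mathrm{PH}_0(Y^{\delta\prime})\to V'=\mathrm{PH}_0(X')$; $f\colon V\to U=\mathrm{PH}_0(Z)$, $f'\colon V'\to U'=\mathrm{PH}_0(Z')$ are induced by inclusion, $f^\delta=f\circ h$, $f^{\delta\prime}=f'\circ h'$, and $f_0,f'_0$ are the degree-0 components of $f,f'$. With $\ker^+_b(U)=\ker\rho^U_{0b}$, $\ker^-_b(U)=\bigcup_{0\le r<b}\ker\rho^U_{0r}$, $\mathcal{M}^0_f(a,b)=\dim\frac{f_0(\ker^+_a V)\cap \ker^+_b U}{f_0(\ker^-_a V)\cap\ker^+_b U+f_0(\ker^+_a V)\cap \ker^-_b U}$; $D(f_0)_O$ is the multiset of pairs $(a,b)\in\mathbb{R}^2$ with multiplicity $\mathcal{M}^0_f(a,b)$ (positive multiplicities only), similarly $D(f'_0)_O$. $\mathrm{Rep}(S,m)=\{(s,\ell):1\le\ell\le m(s)\}$; $\mathcal{B}$ denotes the barcode (multiset of intervals of the interval decomposition). *)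

From HB Require Import structures.
From mathcomp Require Import all_boot all_order all_algebra.
From mathcomp Require Import boolp reals.
Set Implicit Arguments. Unset Strict Implicit. Unset Printing Implicit Defensive.
Import Order.TTheory GRing.Theory Num.Theory.
Local Open Scope ring_scope.

Definition is_metric (R : realType) (T : Type) (d : T -> T -> R) : Prop :=
  [/\ forall x y, 0 <= d x y,
      forall x y, d x y = 0 <-> x = y,
      forall x y, d x y = d y x &
      forall x y z, d x z <= d x y + d y z].

Definition isometric_embedding (R : realType) (T M : Type)
  (dT : T -> T -> R) (dM : M -> M -> R) (g : T -> M) : Prop :=
  forall x y, dM (g x) (g y) = dT x y.

(* d_H(g(A), g'(A')) <= e, for images of FINITE sets A, A' (so inf/sup are
   attained and this is the literal unfolding of the Hausdorff distance). *)
Definition hausdorff_le (R : realType) (M : Type) (dM : M -> M -> R)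
  (T T' : finType) (g : T -> M) (A : {set T}) (g' : T' -> M) (A' : {set T'})
  (e : R) : Prop :=
  [/\ 0 <= e,
      forall x, x \in A -> exists2 x', x' \in A' & dM (g x) (g' x') <= e &
      forall x', x' \in A' -> exists2 x, x \in A & dM (g x) (g' x') <= e].

(* Gromov--Hausdorff distance between pairs (X,Z), (X',Z'):
   eps = inf over metric spaces M and isometric embeddings of Z, Z' into M of
   max(d_H(gX,g'X'), d_H(gZ,g'Z')). *)
Definition dGH_pair_candidates (R : realType) (Z Z' : finType)
  (dZ : Z -> Z -> R) (X : {set Z}) (dZ' : Z' -> Z' -> R) (X' : {set Z'})
  (e : R) : Prop :=
  exists (M : Type) (dM : M -> M -> R) (g : Z -> M) (g' : Z' -> M),
    [/\ is_metric dM, isometric_embedding dZ dM g, isometric_embedding dZ' dM g',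
        hausdorff_le dM g X g' X' e & hausdorff_le dM g [set: Z] g' [set: Z'] e].

Definition is_dGH_pair (R : realType) (Z Z' : finType)
  (dZ : Z -> Z -> R) (X : {set Z}) (dZ' : Z' -> Z' -> R) (X' : {set Z'})
  (eps : R) : Prop :=
  (forall e, dGH_pair_candidates dZ X dZ' X' e -> eps <= e) /\
  (forall l, (forall e, dGH_pair_candidates dZ X dZ' X' e -> l <= e) -> l <= eps).

Definition Yset (Z Z' : finType) (X : {set Z}) (X' : {set Z'})
  (aZ : Z -> Z') (aZ' : Z' -> Z) : {set Z * Z'} :=
  [set p | [&& p.1 \in X, p.2 \in X' & (aZ p.1 == p.2) || (aZ' p.2 == p.1)]].

Definition dYdelta (R : realType) (Z Z' : finType) (dZ : Z -> Z -> R) (delta : R)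
  (p q : Z * Z') : R := if p == q then 0 else delta + dZ p.1 q.1.

Definition dYdelta' (R : realType) (Z Z' : finType) (dZ' : Z' -> Z' -> R) (delta : R)
  (p q : Z * Z') : R := if p == q then 0 else delta + dZ' p.2 q.2.

Notation F2 := 'F_2.

Definition vx (T : finType) (x : T) : 'rV[F2]_#|T| := delta_mx 0 (enum_rank x).

Definition Cspace (T : finType) (S : {set T}) : 'M[F2]_#|T| :=
  (\sum_(x in S) <<vx x>>)%MS.

(* image of the boundary map of VR_r(S): spanned by x + y for edges [x,y] *)
Definition Bspace (R : realType) (T : finType) (d : T -> T -> R) (S : {set T})
  (r : R) : 'M[F2]_#|T| :=
  (\sum_(x in S) \sum_(y in S | (d x y <= r)%R) <<vx x + vx y>>)%MS.

(* A persistence module over [0,oo) given as a family of subquotients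
   M_r = K r / B r of a fixed Z_2^n, structure maps induced by the identity. *)
Record subqmod (R : realType) (n : nat) := SubQMod {
  Kmod : R -> 'M[F2]_n ;
  Bmod : R -> 'M[F2]_n }.

(* PH_0(S, d) : r |-> H_0(VR_r(S)) = C_0(S) / im d_1 *)
Definition PH0 (R : realType) (T : finType) (d : T -> T -> R) (S : {set T}) :
  subqmod R #|T| := SubQMod (fun _ => Cspace S) (Bspace d S).

(* Kernel of the persistence morphism induced by the chain map  c |-> c *m P. *)
Definition kermod (R : realType) (n m : nat) (V : subqmod R n) (U : subqmod R m)
  (P : 'M[F2]_(n, m)) : subqmod R n :=
  SubQMod (fun r => (Kmod V r :&: kermx (P *m cokermx (Bmod U r)))%MS) (Bmod V).

Definition chainmx (T T' : finType) (f : T -> T') : 'M[F2]_(#|T|, #|T'|) :=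
  \matrix_(i, j) (f (enum_val i) == enum_val j)%:R.

(* Subspaces of the degree-0 spaces, represented by their preimages     *)
(* in the ambient Z_2^n (they all contain B 0).                          *)
(* ker^+_b(M) = ker rho_{0b} *)
Definition kerplus (R : realType) n (V : subqmod R n) (b : R) : 'M[F2]_n :=
  (Kmod V 0 :&: Bmod V b)%MS.

Definition span_pred n (P : 'rV[F2]_n -> Prop) : 'M[F2]_n :=
  (\sum_(v : 'rV[F2]_n | `[< P v >]) <<v>>)%MS.

(* ker^-_b(M) = union_{0 <= r < b} ker rho_{0r} (a subspace, being a nested union;
   we take its span, the empty union giving 0) *)
Definition kerminus (R : realType) n (V : subqmod R n) (b : R) : 'M[F2]_n :=
  (Bmod V 0 + span_pred (fun v => exists r : R, (0 <= r)%R /\ (r < b)%R /\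
                                       (v <= kerplus V r)%MS))%MS.

(* image under f_0 of a subspace W of V_0, f induced by the chain map P *)
Definition img0 (R : realType) n m (U : subqmod R m) (P : 'M[F2]_(n, m))
  (W : 'M[F2]_n) : 'M[F2]_m := (W *m P + Bmod U 0)%MS.

(* dim (A / C) for subspaces C <= A *)
Definition qdim n (A C : 'M[F2]_n) : nat := (\rank A - \rank C)%N.

Definition mult0 (R : realType) n m (V : subqmod R n) (U : subqmod R m)
  (P : 'M[F2]_(n, m)) (a b : R) : nat :=
  if (0 <= a) && (0 <= b) then
    qdim (img0 U P (kerplus V a) :&: kerplus U b)%MS
         ((img0 U P (kerminus V a) :&: kerplus U b) +
          (img0 U P (kerplus V a) :&: kerminus U b))%MS
  else 0%N.

Definition itv_ok (R : realType) (I : interval R) : Prop :=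
  (exists x, x \in I) /\ (forall x, x \in I -> 0 <= x).

(* (J, bar, g) is an interval decomposition of the subquotient module V:
   for each j, g j is a morphism from the interval module on bar j into V,
   and at each r >= 0 the classes of the g j r (r in bar j) form a basis
   of V_r; i.e. V is isomorphic to the direct sum of the interval modules. *)
Definition is_interval_decomposition (R : realType) n (V : subqmod R n)
  (J : finType) (bar : J -> interval R) (g : J -> R -> 'rV[F2]_n) : Prop :=
  [/\ forall j, itv_ok (bar j),
      forall j r, r \in bar j -> (g j r <= Kmod V r)%MS,
      forall j r s, r \in bar j -> s \in bar j -> r <= s ->
        (g j s - g j r <= Bmod V s)%MS,
      forall j r s, r \in bar j -> r <= s -> s \notin bar j ->
        (g j r <= Bmod V s)%MS &
      forall r, 0 <= r ->
        (Kmod V r <= Bmod V r + \sum_(j | r \in bar j) <<g j r>>)%MS /\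
      forall (lam : J -> F2),
        ((\sum_(j | r \in bar j) lam j *: g j r)%R <= Bmod V r)%MS ->
        forall j, r \in bar j -> lam j = 0].

Definition bar_mult (R : realType) (J : finType) (bar : J -> interval R)
  (I : interval R) : nat := #|[set j | bar j == I]|.

Definition RepBar (R : realType) (J : finType) (bar : J -> interval R) :=
  {q : interval R * nat | (0 < q.2 <= bar_mult bar q.1)%N}.
Definition RepD (R : realType) (m : R -> R -> nat) :=
  {p : (R * R) * nat | (0 < p.2 <= m p.1.1 p.1.2)%N}.

Definition injection_property (R : realType) (m : R -> R -> nat)
  (J : finType) (bar : J -> interval R) (delta : R) : Prop :=
  exists sigma : RepD m -> RepBar bar,
    [/\ injective sigma,
        forall p : RepD m,
          (sval (sigma p)).1 = `[(sval p).1.2, (sval p).1.1 + delta[ &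
        forall q : RepBar bar, (forall p, sigma p <> q) ->
          (sval q).1 = `[0, delta[ ].

(* Write p : Y -> X for the projection, which is onto, and K = ker f^delta, a subquotient of
   C_0(Y). Distinct points of Y^delta are at distance delta + d^X, so the chain map of p, which
   has a section over X, carries the boundaries of VR_t(Y^delta) onto those of VR_(t-delta)(X),
   and its kernel on C_0(Y) consists of boundaries from scale delta on. Hence for 0 <= s <= t the
   rank of the structure map K_s -> K_t is
     dim f_0^-1(ker^+_s U) - dim (ker^+_(t-delta) V cap f_0^-1(ker^+_s U)) + [t < delta] dim ker p_*.
   These are step functions, so every bar of K is a half-open interval [c, d), and
   inclusion-exclusion on the ranks computes its multiplicity: M^0_f(d - delta, c), plus
   dim ker p_* when [c, d) = [0, delta). The injection sends ((a, b), i) to ([b, a + delta), i). *)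

From HB Require Import structures.
From mathcomp Require Import all_boot all_order all_algebra.
From mathcomp Require Import boolp reals.
From mathcomp Require Import lra zify.
Set Implicit Arguments. Unset Strict Implicit. Unset Printing Implicit Defensive.
Import Order.TTheory GRing.Theory Num.Theory.
Local Open Scope ring_scope.

Lemma mx_addrr_F2 m n (A : 'M[F2]_(m, n)) : A + A = 0.
Proof. by rewrite -mulr2n -scaler_nat (_ : 2%:R = 0 :> F2) ?scale0r //; apply/eqP. Qed.

Lemma mx_oppr_F2 m n (A : 'M[F2]_(m, n)) : - A = A.
Proof. by rewrite -[LHS]add0r -(mx_addrr_F2 A) addrK. Qed.

Lemma submxM_kermx (F : fieldType) m n p q (A : 'M[F]_(m, n)) (Q : 'M_(n, p))
    (M : 'M_(q, p)) :
  (A *m Q <= M)%MS = (A <= kermx (Q *m cokermx M))%MS.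
Proof. by rewrite sub_kermx mulmxA -submxE. Qed.

Lemma mxrank_adds_gen_notin (F : fieldType) m n (B : 'M[F]_(m, n)) (v : 'rV_n) :
  ~~ (v <= B)%MS -> \rank (B + <<v>>)%MS = (\rank B).+1.
Proof.
move=> vB; have v0 : v != 0 by apply: contra vB => /eqP ->; exact: sub0mx.
have := mxrank_sum_cap B <<v>>%MS; rewrite genmxE rank_rV v0 addn1.
suff -> : \rank (B :&: <<v>>)%MS = 0%N by rewrite addn0.
have /mxrank_leqif_eq [le_cap_v eq_cap_v] := capmxSr B <<v>>%MS.
move: le_cap_v; rewrite genmxE rank_rV v0 leq_eqVlt ltnS leqn0 => /orP[/eqP r1|/eqP //].
have /eqmxP e : (B :&: <<v>> == <<v>>)%MS by rewrite -eq_cap_v genmxE rank_rV v0 r1.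
by case/negP: vB; rewrite -(genmxE v) -e capmxSl.
Qed.

Lemma mxrank_adds_indep (F : fieldType) n (I : eqType) (v : I -> 'rV[F]_n) (s : seq I) m
    (B : 'M[F]_(m, n)) :
  uniq s ->
  (forall lam : I -> F, ((\sum_(i <- s) lam i *: v i)%R <= B)%MS ->
     forall i, i \in s -> lam i = 0) ->
  \rank (B + \sum_(i <- s) <<v i>>)%MS = (\rank B + size s)%N.
Proof.
elim: s m B => [|i0 s IH] m B; first by rewrite big_nil addsmx0 addn0.
rewrite cons_uniq => /andP[i0s us] indep.
have nei0 i : i \in s -> (i == i0) = false by move=> si; apply: contraNF i0s => /eqP <-.
rewrite big_cons addsmxA IH //= ?addnS; last first.
  move=> lam /sub_addsmxP[[u1 u2] /= Elam].
  have /sub_rVP[mu Emu] : (u2 *m <<v i0>> <= v i0)%MS by rewrite -(genmxE (v i0)) submxMl.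
  pose lam' i := if i == i0 then - mu else lam i.
  have Esum : (\sum_(i <- i0 :: s) lam' i *: v i)%R = u1 *m B.
    rewrite big_cons /lam' eqxx (eq_big_seq (fun i => lam i *: v i)) => [|i si].
      by rewrite Elam Emu scaleNr addrC addrK.
    by rewrite nei0.
  move=> i si; have := indep lam' _ i; rewrite Esum submxMl /lam' nei0 //.
  by apply=> //; rewrite in_cons si orbT.
rewrite mxrank_adds_gen_notin ?addn1 //; apply/negP => vB.
have := indep (fun i => (i == i0)%:R); rewrite big_cons eqxx scale1r big_seq big1 ?addr0.
  by move/(_ vB i0 (mem_head _ _))/eqP; rewrite eqxx oner_eq0.
by move=> i si; rewrite nei0 ?scale0r.
Qed.

Lemma mxrank_ker_split (F : fieldType) m1 m2 n p (A : 'M[F]_(m1, n)) (C : 'M_(m2, n))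
    (M : 'M_(n, p)) :
  (C :&: kermx M <= A)%MS -> (A <= C)%MS ->
  \rank A = (\rank (A *m M) + \rank (C :&: kermx M))%N.
Proof.
move=> kerA AC; rewrite -[LHS](mxrank_mul_ker A M); congr (_ + _)%N.
apply/eqmx_rank/andP; split; first by rewrite capmxS ?submx_refl.
by rewrite sub_capmx kerA capmxSr.
Qed.

Section ChainSpaces.
Variables (R : realType) (T : finType) (d : T -> T -> R).
Implicit Types (S : {set T}) (r s : R).

Lemma vx_Cspace S x : x \in S -> (vx x <= Cspace S)%MS.
Proof. by move=> xS; apply: (sumsmx_sup x); rewrite ?genmxE. Qed.

Lemma Cspace_subP S m (M : 'M[F2]_(m, #|T|)) :
  (forall x, x \in S -> (vx x <= M)%MS) -> (Cspace S <= M)%MS.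
Proof. by move=> sub; apply/sumsmx_subP => x xS; rewrite genmxE sub. Qed.

Lemma Cspace_subset S S' : S \subset S' -> (Cspace S <= Cspace S')%MS.
Proof. by move=> sS; apply: Cspace_subP => x /(subsetP sS)/vx_Cspace. Qed.

Lemma vx_Bspace S r x y :
  x \in S -> y \in S -> d x y <= r -> ((vx x + vx y)%R <= Bspace d S r)%MS.
Proof.
move=> xS yS dxy; apply: (sumsmx_sup x) => //.
by apply: (sumsmx_sup y); rewrite ?genmxE ?yS.
Qed.

Lemma Bspace_subP S r m (M : 'M[F2]_(m, #|T|)) :
  (forall x y, x \in S -> y \in S -> d x y <= r -> ((vx x + vx y)%R <= M)%MS) ->
  (Bspace d S r <= M)%MS.
Proof.
move=> sub; apply/sumsmx_subP => x xS; apply/sumsmx_subP => y /andP[yS dxy].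
by rewrite genmxE sub.
Qed.

Lemma Bspace_Cspace S r : (Bspace d S r <= Cspace S)%MS.
Proof. by apply: Bspace_subP => x y xS yS _; rewrite addmx_sub ?vx_Cspace. Qed.

Lemma Bspace_gap S r s :
  (forall x y, x \in S -> y \in S -> d x y <= s -> d x y <= r) ->
  (Bspace d S s <= Bspace d S r)%MS.
Proof. by move=> gap; apply: Bspace_subP => x y xS yS /(gap x y xS yS); apply: vx_Bspace. Qed.

Lemma Bspace_le S r s : r <= s -> (Bspace d S r <= Bspace d S s)%MS.
Proof. by move=> rs; apply: Bspace_gap => x y _ _ dxy; apply: le_trans rs. Qed.

Lemma Bspace_subset S S' r : S \subset S' -> (Bspace d S r <= Bspace d S' r)%MS.
Proof.
by move=> sS; apply: Bspace_subP => x y /(subsetP sS) xS' /(subsetP sS); apply: vx_Bspace.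
Qed.

Lemma Bspace_eq0 S r :
  (forall x y, x \in S -> y \in S -> d x y <= r -> x = y) ->
  (Bspace d S r <= (0 : 'M[F2]_#|T|))%MS.
Proof.
by move=> eq; apply: Bspace_subP => x y xS yS /(eq x y xS yS) ->; rewrite mx_addrr_F2 sub0mx.
Qed.

End ChainSpaces.

Lemma vx_chainmx (T T' : finType) (f : T -> T') x : vx x *m chainmx f = vx (f x).
Proof.
rewrite /vx -rowE; apply/rowP => j; rewrite !mxE enum_rankK /=.
by rewrite eq_sym -(inj_eq enum_val_inj) enum_rankK.
Qed.

Section Gaps.
Variable R : realType.
Implicit Types (s : seq R) (c lo r : R).

Lemma gap_below s lo r : lo < r ->
  exists t, [/\ lo <= t, t < r & forall z, z \in s -> z < r -> z <= t].
Proof.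
move=> lor; exists (\big[Order.max/lo]_(z <- s | z < r) z); split.
- exact: bigmax_ge_id.
- exact: bigmax_lt.
- by move=> z zs zr; apply: le_bigmax_seq.
Qed.

Lemma gap_above s c : exists2 t, c < t & forall z, z \in s -> z <= t -> z <= c.
Proof.
pose m := \big[Order.min/c + 1]_(z <- s | c < z) z.
have cm : c < m by apply: lt_bigmin => //; lra.
exists ((c + m) / 2) => [|z zs zt]; first lra.
rewrite leNgt; apply/negP => cz.
have : m <= z by apply: ge_bigmin_seq.
lra.
Qed.

Lemma finite_bounded (T : finType) (f : T -> R) : exists2 D, 0 <= D & forall x, f x <= D.
Proof. by exists (\big[Order.max/0]_x f x) => [|x]; [apply: bigmax_ge_id | apply: le_bigmax]. Qed.

End Gaps.

Section IntervalShape.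
Variable R : realType.
Implicit Types (I : interval R) (l r : itv_bound R).

Definition locally_constant_right I :=
  forall c, 0 <= c -> exists2 t, c < t & forall u, c <= u <= t -> (u \in I) = (c \in I).

Lemma itv_left_closed l r :
  itv_ok (Interval l r) -> locally_constant_right (Interval l r) -> exists c, l = BLeft c.
Proof.
case=> [[x xI] ge0] loc; have x0 := ge0 x xI.
move: xI; rewrite itv_boundlr => /andP[lx xr].
have memI y : (l <= BLeft y)%O -> y <= x -> y \in Interval l r.
  by move=> ly yx; rewrite itv_boundlr ly (le_trans _ xr) // bnd_simp.
case: l lx memI ge0 loc => [[] c|[]] lx memI ge0 loc; first by exists c.
- move: lx; rewrite bnd_simp => cx.
  have [c0|c0] := ltrP c 0.
    have c2I : c / 2 \in Interval (BRight c) r by apply: memI; rewrite ?bnd_simp; lra.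
    by have := ge0 _ c2I; lra.
  have [t ct tI] := loc c c0.
  have [u [cu ut ux]] : exists u, [/\ c < u, u <= t & u <= x].
    by case: (lerP t x) => tx; [exists t | exists x]; split => //; lra.
  have := tI u; rewrite (ltW cu) ut memI ?bnd_simp // itv_boundlr bnd_simp ltxx.
  by move/(_ isT).
- have N1I : -1 \in Interval -oo%O r by apply: memI; rewrite ?bnd_simp; lra.
  by have := ge0 _ N1I; lra.
- by [].
Qed.

Lemma itv_right_open l r :
  itv_ok (Interval l r) -> locally_constant_right (Interval l r) ->
  (exists u0, forall u, u0 <= u -> u \notin Interval l r) -> exists d, r = BLeft d.
Proof.
case=> [[x xI] ge0] loc [u0 van]; have x0 := ge0 x xI.
move: xI; rewrite itv_boundlr => /andP[lx xr].
have memI y : x <= y -> (BRight y <= r)%O -> y \in Interval l r.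
  by move=> xy yr; rewrite itv_boundlr yr (le_trans lx) // bnd_simp.
case: r xr memI ge0 loc van => [[] d|[]] xr memI ge0 loc van; first by exists d.
- move: xr; rewrite bnd_simp => xd.
  have dI : d \in Interval l (BRight d) by rewrite memI ?bnd_simp.
  have [t dt tI] := loc d (le_trans x0 xd).
  have := tI t; rewrite (ltW dt) lexx dI itv_boundlr bnd_simp [t <= d]leNgt dt andbF.
  by move/(_ isT).
- by [].
- have [y [u0y xy]] : exists y, u0 <= y /\ x <= y.
    by case: (lerP u0 x) => ux; [exists x | exists u0]; split => //; lra.
  by have := van y u0y; rewrite memI.
Qed.

Lemma itv_co_shape I :
  itv_ok I -> locally_constant_right I ->
  (exists u0, forall u, u0 <= u -> u \notin I) ->
  exists c d, [/\ 0 <= c, c < d & I = `[c, d[].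
Proof.
case: I => l r ok loc van.
have [c lc] := itv_left_closed ok loc; have [d rd] := itv_right_open ok loc van.
move: ok; rewrite lc rd => -[[x]]; rewrite in_itv /= => /andP[cx xd] ge0.
exists c, d; split; [|exact: le_lt_trans xd|by []].
by apply: ge0; rewrite in_itv /= lexx (le_lt_trans cx xd).
Qed.

End IntervalShape.

Definition bars_over (R : realType) (J : finType) (bar : J -> interval R) (s t : R) :
  {set J} := [set j | (s \in bar j) && (t \in bar j)].

Section BarsOver.
Variables (R : realType) (J : finType) (bar : J -> interval R).

Lemma bars_over_mem_eq c u j :
  #|bars_over bar c u| = #|bars_over bar c c| ->
  #|bars_over bar c u| = #|bars_over bar u u| ->
  (u \in bar j) = (c \in bar j).
Proof.
move=> e1 e2.
have /(subset_cardP e1) E1 : bars_over bar c u \subset bars_over bar c c.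
  by apply/subsetP => i; rewrite !inE => /andP[->].
have /(subset_cardP e2) E2 : bars_over bar c u \subset bars_over bar u u.
  by apply/subsetP => i; rewrite !inE => /andP[_ ->].
apply/idP/idP => ji.
  have : j \in bars_over bar u u by rewrite inE ji.
  by rewrite -E2 inE => /andP[].
have : j \in bars_over bar c c by rewrite inE ji.
by rewrite -E1 inE => /andP[].
Qed.

Lemma bars_over_card0 u j : #|bars_over bar u u| = 0%N -> u \notin bar j.
Proof. by move/cards0_eq/setP/(_ j); rewrite !inE andbb => ->. Qed.

End BarsOver.

Section Decomposition.
Variables (R : realType) (n : nat) (V : subqmod R n).
Variables (J : finType) (bar : J -> interval R) (g : J -> R -> 'rV[F2]_n).
Hypothesis Bmod_le : forall s t, s <= t -> (Bmod V s <= Bmod V t)%MS.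
Hypothesis decV : is_interval_decomposition V bar g.

Lemma persistence_span s t : 0 <= s -> s <= t ->
  (Kmod V s + Bmod V t == Bmod V t + \sum_(j in bars_over bar s t) <<g j t>>)%MS.
Proof.
case: decV => _ gK gmor gdie basis s0 st.
set S := bars_over bar s t; set G := (\sum_(j in S) _)%MS.
have GS j : j \in S -> (g j t <= G)%MS by move=> jS; apply: (sumsmx_sup j); rewrite ?genmxE.
apply/andP; split; rewrite addsmx_sub; apply/andP; split.
- apply: submx_trans (basis s s0).1 _.
  rewrite addsmx_sub (submx_trans (Bmod_le st)) ?addsmxSl //=.
  apply/sumsmx_subP => j sj; rewrite genmxE.
  have [tj|tj] := boolP (t \in bar j); last first.
    exact: submx_trans (gdie j s t sj st tj) (addsmxSl _ _).
  have -> : g j s = g j t - (g j t - g j s) by rewrite opprB addrC subrK.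
  rewrite addmx_sub ?eqmx_opp //.
    by apply: submx_trans (addsmxSr _ _); apply: GS; rewrite inE sj tj.
  exact: submx_trans (gmor j s t sj tj st) (addsmxSl _ _).
- exact: addsmxSl.
- exact: addsmxSr.
apply/sumsmx_subP => j; rewrite inE genmxE => /andP[sj tj].
have -> : g j t = g j s + (g j t - g j s) by rewrite addrC subrK.
rewrite addmx_sub //; first exact: submx_trans (gK j s sj) (addsmxSl _ _).
exact: submx_trans (gmor j s t sj tj st) (addsmxSr _ _).
Qed.

Lemma mxrank_persistence s t : 0 <= s -> s <= t ->
  \rank (Kmod V s + Bmod V t)%MS = (\rank (Bmod V t) + #|bars_over bar s t|)%N.
Proof.
move=> s0 st; rewrite (eqmx_rank (persistence_span s0 st)).
set S := bars_over bar s t; case: decV => _ _ _ _ basis.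
rewrite -big_enum mxrank_adds_indep ?enum_uniq -?cardE // => lam lamB j.
rewrite mem_enum => jS; have := jS; rewrite inE => /andP[_ tj].
have := (basis t (le_trans s0 st)).2 (fun i => if i \in S then lam i else 0) _ j tj.
rewrite jS; apply; suff <- : (\sum_(i in S) lam i *: g i t)%R =
    (\sum_(i | t \in bar i) (if i \in S then lam i else 0) *: g i t)%R by rewrite -big_enum.
rewrite big_mkcond [RHS]big_mkcond; apply: eq_bigr => i _.
case iS: (i \in S); last by case: (t \in bar i); rewrite ?scale0r.
by move: iS; rewrite inE => /andP[_ ->].
Qed.

End Decomposition.

Lemma card_set_sum (J : finType) (P : pred J) : #|[set j | P j]| = (\sum_j P j)%N.
Proof. by rewrite -sum1dep_card big_mkcond; apply: eq_bigr => j _; case: (P j). Qed.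

Section Endpoints.
Variables (R : realType) (J : finType) (bar : J -> interval R) (lb rb : J -> R).
Hypothesis bar_co : forall j, bar j = `[lb j, rb j[.

Definition bars_co_over s t := [set j | (lb j <= s) && (t < rb j)].

Lemma bars_over_co s t : s <= t -> bars_over bar s t = bars_co_over s t.
Proof.
move=> st; apply/setP => j; rewrite !in_set !bar_co !in_itv /=.
apply/idP/idP => [/andP[/andP[-> _] /andP[_ ->]] // | /andP[ls tr]].
by rewrite ls tr (le_trans ls st) (le_lt_trans st tr).
Qed.

Lemma bar_mult_co c d : bar_mult bar `[c, d[ = #|[set j | (lb j == c) && (rb j == d)]|.
Proof.
rewrite /bar_mult; apply: eq_card => j; rewrite !inE bar_co.
by apply/eqP/andP => [[-> ->] | [/eqP -> /eqP ->]].
Qed.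

Lemma bars_incl_excl c' c d' d : c' < c -> d' < d ->
  (forall j, (lb j <= c') || (c <= lb j)) -> (forall j, (rb j <= d') || (d <= rb j)) ->
  (#|[set j | (lb j == c) && (rb j == d)]| + #|bars_co_over c' d'| + #|bars_co_over c d|
   = #|bars_co_over c d'| + #|bars_co_over c' d|)%N.
Proof.
move=> c'c d'd gapl gapr; rewrite /bars_co_over !card_set_sum -!big_split /=.
apply: eq_bigr => j _; rewrite eq_le [rb j == d]eq_le.
move: (gapl j) (gapr j).
by case: (lerP (lb j) c'); case: (lerP (lb j) c); case: (lerP c (lb j));
   case: (ltrP d' (rb j)); case: (ltrP d (rb j)); case: (lerP d (rb j)) => //= *; exfalso; lra.
Qed.

End Endpoints.

Lemma injection_property_of_bar_mult (R : realType) (m : R -> R -> nat)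
    (J : finType) (bar : J -> interval R) (delta : R) (k : nat) :
  0 < delta ->
  (forall j, exists c d, [/\ 0 <= c, c < d & bar j = `[c, d[]) ->
  (forall a b, (0 < m a b)%N -> [/\ 0 < a, 0 <= b & b <= a]) ->
  (forall c d, 0 <= c -> c < d ->
     bar_mult bar `[c, d[ = (m (d - delta)%R c + ((c == 0%R) && (d == delta)) * k)%N) ->
  injection_property m bar delta.
Proof.
move=> delta0 bar_co m_supp bar_multE.
have sigmaP (p : RepD m) :
    (0 < (sval p).2 <= bar_mult bar `[(sval p).1.2, ((sval p).1.1 + delta)%R[)%N.
  case: p => -[[a b] i] /= /andP[i0 im]; have [a0 b0 ba] := m_supp a b (leq_trans i0 im).
  rewrite i0 bar_multE ?addrK //=; last lra.
  by rewrite [a + delta == delta](_ : _ = false) ?andbF ?addn0 //; apply/negbTE; lra.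
exists (fun p => exist _ (`[(sval p).1.2, (sval p).1.1 + delta[, (sval p).2) (sigmaP p)).
split => // [[[[a1 b1] i1] p1] [[[a2 b2] i2] p2] /(congr1 sval) /= [eb ea ei]|].
  by apply: val_inj; rewrite /= eb ei (addIr _ ea).
move=> [[I l] ql] not_img; have /andP[/= l0 lI] := ql.
have [j] : exists j, j \in [set j | bar j == I].
  by apply/set0Pn; rewrite -card_gt0 (leq_trans l0 lI).
rewrite inE => /eqP bjI; have [c [d [c0 cd bj]]] := bar_co j; rewrite -bjI bj.
have [/andP[/eqP-> /eqP->] // | not_cd] := boolP ((c == 0) && (d == delta)).
have lm : (0 < l <= m (d - delta)%R c)%N.
  by rewrite l0 /=; move: lI; rewrite -bjI bj bar_multE // (negbTE not_cd) mul0n addn0.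
by case: (not_img (exist _ ((d - delta, c), l) lm)); apply: val_inj; rewrite /= subrK -bj bjI.
Qed.

Section DegreeZero.
Variables (R : realType) (W : finType) (dW : W -> W -> R).
Hypothesis dW_metric : is_metric dW.
Variable X : {set W}.

Local Notation V := (PH0 dW X).
Local Notation U := (PH0 dW [set: W]).

Lemma dW_ge0 x y : 0 <= dW x y.
Proof. by case: dW_metric => ge0 _ _ _; exact: ge0. Qed.

Lemma dW_eq0 x y : dW x y = 0 -> x = y.
Proof. by case: dW_metric => _ eq0 _ _ /eq0. Qed.

Lemma dWxx x : dW x x = 0.
Proof. by case: dW_metric => _ eq0 _ _; apply/eq0. Qed.

Lemma Bspace_le0 (S : {set W}) u : u <= 0 -> (Bspace dW S u <= (0 : 'M[F2]_#|W|))%MS.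
Proof.
by move=> u0; apply: Bspace_eq0 => x y _ _ dxy; apply: dW_eq0; have := dW_ge0 x y; lra.
Qed.

Lemma kerplus_le0 (S : {set W}) a : a <= 0 -> (kerplus (PH0 dW S) a <= (0 : 'M_#|W|))%MS.
Proof. by move=> a0; apply: submx_trans (capmxSr _ _) (Bspace_le0 _ a0). Qed.

Lemma kerplus_le (S : {set W}) a a' : a' <= a ->
  (kerplus (PH0 dW S) a' <= kerplus (PH0 dW S) a)%MS.
Proof. by move=> a'a; apply: capmxS => //; apply: Bspace_le. Qed.

Lemma kerplus_sub_kerminus (S : {set W}) a a' : 0 <= a' -> a' < a ->
  (kerplus (PH0 dW S) a' <= kerminus (PH0 dW S) a)%MS.
Proof.
move=> a'0 a'a; apply: submx_trans (addsmxSr _ _); apply/row_subP => i.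
apply: (sumsmx_sup (row i (kerplus (PH0 dW S) a'))); rewrite ?genmxE //.
by apply/asboolP; exists a'; rewrite row_sub.
Qed.

Lemma kerminus_gap (S : {set W}) a a' : 0 <= a' -> a' < a ->
  (forall x y, x \in S -> y \in S -> dW x y < a -> dW x y <= a') ->
  (kerminus (PH0 dW S) a :=: kerplus (PH0 dW S) a')%MS.
Proof.
move=> a'0 a'a gap; apply/eqmxP/andP; split; last exact: kerplus_sub_kerminus.
rewrite addsmx_sub sub_capmx Bspace_Cspace Bspace_le //=.
apply/sumsmx_subP => v /asboolP [r [r0 [ra vK]]]; rewrite genmxE.
apply: submx_trans vK (capmxS _ _) => //; apply: Bspace_gap => x y xS yS dxy.
by apply: gap; rewrite ?(le_lt_trans dxy).
Qed.

Lemma kerplusVU a : (kerplus V a <= kerplus U a)%MS.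
Proof. by apply: capmxS; [apply: Cspace_subset | apply: Bspace_subset]; apply: subsetT. Qed.

Lemma img0_id (A : 'M[F2]_#|W|) : (img0 U 1%:M A :=: A)%MS.
Proof.
apply/eqmxP/andP; split; last by rewrite /img0 mulmx1 addsmxSl.
by rewrite /img0 mulmx1 addsmx_sub submx_refl (submx_trans (Bspace_le0 _ (lexx 0))) ?sub0mx.
Qed.

Definition dim_kerVU a b := \rank (kerplus V a :&: kerplus U b)%MS.

Lemma dim_kerVU_le0l a b : a <= 0 -> dim_kerVU a b = 0%N.
Proof.
by move=> a0; apply/eqP; rewrite mxrank_eq0 -submx0 (submx_trans (capmxSl _ _)) ?kerplus_le0.
Qed.

Lemma dim_kerVU_le0r a b : b <= 0 -> dim_kerVU a b = 0%N.
Proof.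
by move=> b0; apply/eqP; rewrite mxrank_eq0 -submx0 (submx_trans (capmxSr _ _)) ?kerplus_le0.
Qed.

Lemma dim_kerVU_eq a a' b b' :
  (Bspace dW X a == Bspace dW X a')%MS ->
  (Bspace dW [set: W] b == Bspace dW [set: W] b')%MS ->
  dim_kerVU a b = dim_kerVU a' b'.
Proof.
move=> /eqmxP eA /eqmxP eB; apply/eqmx_rank/eqmxP.
by apply: cap_eqmx; apply: cap_eqmx.
Qed.

Lemma mult0_gt0 a b : (0 < mult0 V U 1%:M a b)%N -> [/\ 0 < a, 0 < b & b <= a].
Proof.
rewrite /mult0; case: ifP => // /andP[a0 b0]; rewrite /qdim subn_gt0.
set A := (img0 U 1%:M (kerplus V a) :&: kerplus U b)%MS => rank_lt.
have A_ne0 : ~~ (A <= (0 : 'M_#|W|))%MS.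
  by apply: contraTN rank_lt => /mxrankS; rewrite mxrank0 leqn0 => /eqP ->; rewrite ltn0.
split.
- rewrite lt_neqAle a0 andbT; apply: contraNneq A_ne0 => a00.
  by apply: submx_trans (capmxSl _ _) _; rewrite (img0_id _) kerplus_le0 -?a00.
- rewrite lt_neqAle b0 andbT; apply: contraNneq A_ne0 => b00.
  by apply: submx_trans (capmxSr _ _) _; rewrite kerplus_le0 -?b00.
rewrite leNgt; apply: contraTN rank_lt => ab; rewrite -leqNgt mxrankS //.
apply: submx_trans (addsmxSr _ _); rewrite sub_capmx capmxSl /=.
apply: submx_trans (capmxSl _ _) _; rewrite (img0_id _).
exact: submx_trans (kerplusVU a) (kerplus_sub_kerminus _ a0 ab).
Qed.

Lemma mult0_incl_excl a a' b b' : 0 <= a' -> a' < a -> 0 <= b' -> b' < b ->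
  (forall x y, x \in X -> y \in X -> dW x y < a -> dW x y <= a') ->
  (forall x y, dW x y < b -> dW x y <= b') ->
  (mult0 V U 1%:M a b + dim_kerVU a' b + dim_kerVU a b'
   = dim_kerVU a b + dim_kerVU a' b')%N.
Proof.
move=> a'0 a'a b'0 b'b gapa gapb.
rewrite /mult0 (le_trans a'0 (ltW a'a)) (le_trans b'0 (ltW b'b)) /qdim /dim_kerVU.
have mV := kerminus_gap a'0 a'a gapa.
have mU : (kerminus U b :=: kerplus U b')%MS by apply: kerminus_gap => // x y _ _; apply: gapb.
set KVa := kerplus V a; set KVa' := kerplus V a'; set KUb := kerplus U b; set KUb' := kerplus U b'.
have KV : (KVa' <= KVa)%MS by apply: kerplus_le; apply: ltW.
have KU : (KUb' <= KUb)%MS by apply: kerplus_le; apply: ltW.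
have -> : \rank (img0 U 1%:M KVa :&: KUb)%MS = \rank (KVa :&: KUb)%MS.
  by apply/eqmx_rank/eqmxP/cap_eqmx; [apply: img0_id | apply: eqmx_refl].
have -> : \rank (img0 U 1%:M (kerminus V a) :&: KUb + img0 U 1%:M KVa :&: kerminus U b)%MS
        = \rank (KVa' :&: KUb + KVa :&: KUb')%MS.
  apply/eqmx_rank/eqmxP/adds_eqmx; apply: cap_eqmx => //; first exact: eqmx_trans (img0_id _) mV.
  exact: img0_id.
have cap : \rank (KVa' :&: KUb :&: (KVa :&: KUb'))%MS = \rank (KVa' :&: KUb')%MS.
  apply/eqmx_rank/andP; split; first by apply: capmxS; [apply: capmxSl | apply: capmxSr].
  by rewrite sub_capmx; apply/andP; split; apply: capmxS => //; apply: submx_refl.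
have le : (\rank (KVa' :&: KUb + KVa :&: KUb')%MS <= \rank (KVa :&: KUb)%MS)%N.
  by apply: mxrankS; rewrite addsmx_sub; apply/andP; split; apply: capmxS => //; apply: submx_refl.
have := mxrank_sum_cap (KVa' :&: KUb)%MS (KVa :&: KUb')%MS; rewrite cap /= => sum_cap.
by rewrite -addnA -sum_cap addnA subnK.
Qed.

Definition augmentation : 'cV[F2]_#|W| := const_mx 1.

Lemma vx_augmentation x : vx x *m augmentation = 1%:M.
Proof. by rewrite /vx -rowE; apply/matrixP => i j; rewrite !mxE !ord1. Qed.

Lemma Bspace_augmentation (S : {set W}) r : (Bspace dW S r <= kermx augmentation)%MS.
Proof.
apply: Bspace_subP => x y _ _ _.
by rewrite sub_kermx mulmxDl !vx_augmentation mx_addrr_F2.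
Qed.

(* A zero-sum chain on X is a sum of edges [x, x0] to a fixed vertex x0. *)
Lemma Cspace_augmentation_sub u : (forall x y, x \in X -> y \in X -> dW x y <= u) ->
  (Cspace X :&: kermx augmentation <= Bspace dW X u)%MS.
Proof.
move=> diam; have [X0 | [x0 x0X]] := set_0Vmem X.
  by apply: submx_trans (capmxSl _ _) _; apply: Cspace_subP => x; rewrite X0 inE.
set A := (Cspace X :&: _)%MS.
have Aaug : A *m augmentation = 0 by apply/sub_kermxP; exact: capmxSr.
have -> : A = A *m (1%:M - augmentation *m vx x0).
  by rewrite mulmxBr mulmx1 mulmxA Aaug mul0mx subr0.
rewrite submxM_kermx; apply: submx_trans (capmxSl _ _) _; apply: Cspace_subP => x xX.
rewrite -submxM_kermx mulmxBr mulmx1 mulmxA mx_oppr_F2 vx_augmentation mul1mx.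
by rewrite vx_Bspace ?diam.
Qed.

(* The chains on X that bound in Z at scale b, i.e. f_0^{-1}(ker^+_b U) inside V_0 = C_0(X). *)
Definition dieZ b := (Cspace X :&: Bspace dW [set: W] b)%MS.

Lemma rank_dieZ_cap a b : \rank (dieZ b :&: Bspace dW X a)%MS = dim_kerVU a b.
Proof.
have CXW : (Cspace X <= Cspace [set: W])%MS by apply: Cspace_subset; apply: subsetT.
apply/eqmx_rank/andP; split; rewrite /dieZ /dim_kerVU /kerplus /= sub_capmx.
  rewrite capmxS ?submx_refl ?capmxSl //=.
  by apply: submx_trans (capmxSl _ _) _; rewrite capmxS ?submx_refl.
rewrite sub_capmx -andbA; apply/and3P; split.
- by apply: submx_trans (capmxSl _ _) _; apply: capmxSl.
- by apply: submx_trans (capmxSr _ _) _; apply: capmxSr.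
- by apply: submx_trans (capmxSl _ _) _; apply: capmxSr.
Qed.

Lemma dim_kerVU_diam a b : (forall x y, x \in X -> y \in X -> dW x y <= a) ->
  dim_kerVU a b = \rank (dieZ b).
Proof.
move=> diam; rewrite -rank_dieZ_cap; apply/eqmx_rank/eqmxP/capmx_idPl.
apply: submx_trans (Cspace_augmentation_sub diam).
by apply: capmxS; [apply: submx_refl | apply: Bspace_augmentation].
Qed.

Lemma rank_dieZ_le0 b : b <= 0 -> \rank (dieZ b) = 0%N.
Proof. by move=> b0; apply/eqP; rewrite mxrank_eq0 -submx0 (submx_trans (capmxSr _ _)) ?Bspace_le0. Qed.

Lemma rank_dieZ_eq b b' :
  (Bspace dW [set: W] b == Bspace dW [set: W] b')%MS -> \rank (dieZ b) = \rank (dieZ b').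
Proof. by move/eqmxP=> e; apply/eqmx_rank/eqmxP; apply: cap_eqmx. Qed.

End DegreeZero.

Section ProjectionKernel.
Variables (R : realType) (T W : finType) (pi : T -> W) (dW : W -> W -> R).
Hypothesis dW_metric : is_metric dW.
Variables (X : {set W}) (Y : {set T}).
Hypothesis pi_Y : forall y, y \in Y -> pi y \in X.
Hypothesis pi_onto : forall x, x \in X -> exists2 y, y \in Y & pi y = x.
Variables (delta : R) (dT : T -> T -> R).
Hypothesis delta_gt0 : 0 < delta.
Hypothesis dT_def : forall p q, dT p q = if p == q then 0 else delta + dW (pi p) (pi q).

Local Notation P := (chainmx pi).
Local Notation Kf := (kermod (PH0 dT Y) (PH0 dW [set: W]) (chainmx pi *m 1%:M)).

(* A chain-level section of [pi] over [X]. *)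
Definition lift_mx : 'M[F2]_(#|W|, #|T|) :=
  \matrix_(i, j) ([pick y in Y | pi y == enum_val i] == Some (enum_val j))%:R.

Lemma vx_lift x : x \in X -> exists y, [/\ y \in Y, pi y = x & vx x *m lift_mx = vx y].
Proof.
move=> xX.
have -> : vx x *m lift_mx = if [pick y in Y | pi y == x] is Some y then vx y else 0.
  rewrite /vx -rowE; apply/rowP => j; rewrite !mxE enum_rankK.
  case: [pick y in Y | _] => [y|]; rewrite !mxE //=.
  by rewrite eq_sym -(inj_eq enum_val_inj) enum_rankK.
case: pickP => [y /andP[yY /eqP pyx] | none]; first by exists y.
by have [y yY pyx] := pi_onto xX; have := none y; rewrite yY pyx eqxx.
Qed.

Lemma lift_chainK m (A : 'M[F2]_(m, #|W|)) : (A <= Cspace X)%MS -> A *m lift_mx *m P = A.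
Proof.
move=> AX; apply/eqP; rewrite -subr_eq0 -mulmxA -{2}[A]mulmx1 -mulmxBr; apply/eqP/sub_kermxP.
apply: submx_trans AX _; apply: Cspace_subP => x /vx_lift [y [_ pyx vxL]].
by rewrite sub_kermx mulmxBr mulmxA vxL vx_chainmx pyx mulmx1 subrr.
Qed.

Lemma lift_Cspace m (A : 'M[F2]_(m, #|W|)) : (A <= Cspace X)%MS -> (A *m lift_mx <= Cspace Y)%MS.
Proof.
move=> AX; rewrite submxM_kermx; apply: submx_trans AX _; apply: Cspace_subP => x xX.
by have [y [yY _ vxL]] := vx_lift xX; rewrite -submxM_kermx vxL vx_Cspace.
Qed.

Lemma chain_Cspace m (A : 'M[F2]_(m, #|T|)) : (A <= Cspace Y)%MS -> (A *m P <= Cspace X)%MS.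
Proof.
move=> AY; rewrite submxM_kermx; apply: submx_trans AY _; apply: Cspace_subP => y yY.
by rewrite -submxM_kermx vx_chainmx vx_Cspace ?pi_Y.
Qed.

Lemma chain_Bspace m t (A : 'M[F2]_(m, #|T|)) :
  (A <= Bspace dT Y t)%MS -> (A *m P <= Bspace dW X (t - delta))%MS.
Proof.
move=> AB; rewrite submxM_kermx; apply: submx_trans AB _; apply: Bspace_subP => p q pY qY.
rewrite -submxM_kermx mulmxDl !vx_chainmx dT_def; case: eqP => [-> _|_ dpq].
  by rewrite mx_addrr_F2 sub0mx.
by rewrite vx_Bspace ?pi_Y //; lra.
Qed.

Lemma lift_Bspace m u (A : 'M[F2]_(m, #|W|)) :
  (A <= Bspace dW X u)%MS -> (A *m lift_mx <= Bspace dT Y (u + delta))%MS.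
Proof.
move=> AB; rewrite submxM_kermx; apply: submx_trans AB _; apply: Bspace_subP => x z xX zX dxz.
have [x' [x'Y px' vxL]] := vx_lift xX; have [z' [z'Y pz' vzL]] := vx_lift zX.
rewrite -submxM_kermx mulmxDl vxL vzL; have [<-|x'z'] := eqVneq x' z'.
  by rewrite mx_addrr_F2 sub0mx.
by rewrite vx_Bspace // dT_def (negPf x'z') px' pz'; lra.
Qed.

Lemma Bspace_chain t : (Bspace dT Y t *m P :=: Bspace dW X (t - delta))%MS.
Proof.
apply/eqmxP/andP; split; first exact: chain_Bspace.
rewrite -{1}(lift_chainK (Bspace_Cspace _ _ _)) submxMr //.
by have := lift_Bspace (submx_refl (Bspace dW X (t - delta))); rewrite subrK.
Qed.

Lemma Kmod_sub m s (A : 'M[F2]_(m, #|T|)) :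
  (A <= Kmod Kf s)%MS = (A <= Cspace Y)%MS && (A *m P <= Bspace dW [set: W] s)%MS.
Proof. by rewrite /= sub_capmx mulmx1 -submxM_kermx. Qed.

Lemma Kmod_chain s : (Kmod Kf s *m P :=: dieZ dW X s)%MS.
Proof.
have := submx_refl (Kmod Kf s); rewrite Kmod_sub => /andP[KY KB].
apply/eqmxP/andP; split.
  by rewrite sub_capmx chain_Cspace.
rewrite /dieZ -{1}(lift_chainK (capmxSl _ _)) submxMr // Kmod_sub lift_Cspace ?capmxSl //=.
by rewrite lift_chainK ?capmxSl ?capmxSr.
Qed.

Definition kerP := (Cspace Y :&: kermx P)%MS.

Lemma kerP_Kmod s : (kerP <= Kmod Kf s)%MS.
Proof.
rewrite Kmod_sub capmxSl.
by have /sub_kermxP -> := capmxSr (Cspace Y) (kermx P); rewrite sub0mx.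
Qed.

(* A chain on Y killed by the projection is a sum of the edges [y, y'] with pi y = pi y',
   all of length delta. *)
Lemma kerP_Bspace t : delta <= t -> (kerP <= Bspace dT Y t)%MS.
Proof.
move=> dt; have kP : kerP *m P = 0 by apply/sub_kermxP; apply: capmxSr.
have -> : kerP = kerP *m (1%:M - P *m lift_mx) by rewrite mulmxBr mulmx1 mulmxA kP mul0mx subr0.
rewrite submxM_kermx; apply: submx_trans (capmxSl _ _) _; apply: Cspace_subP => y yY.
have [y' [y'Y py' vxL]] := vx_lift (pi_Y yY).
rewrite -submxM_kermx mulmxBr mulmx1 mulmxA vx_chainmx vxL mx_oppr_F2.
have [<-|yy'] := eqVneq y y'; first by rewrite mx_addrr_F2 sub0mx.
by rewrite vx_Bspace // dT_def (negPf yy') py' dWxx // addr0.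
Qed.

Lemma Bspace_lt_delta t : t < delta -> (Bspace dT Y t <= (0 : 'M[F2]_#|T|))%MS.
Proof.
move=> td; apply: Bspace_eq0 => p q _ _; rewrite dT_def; case: eqP => // _.
move=> dpq; have dW0 := dW_ge0 dW_metric (pi p) (pi q); exfalso; lra.
Qed.

Lemma rank_Bspace_kerP t :
  (\rank (Bspace dT Y t :&: kermx P)%MS + (t < delta)%R * \rank kerP = \rank kerP)%N.
Proof.
have [td|dt] := ltrP t delta; last first.
  rewrite mul0n addn0; apply/eqmx_rank/andP; split.
    by rewrite /kerP sub_capmx capmxSr (submx_trans (capmxSl _ _) (Bspace_Cspace _ _ _)).
  by rewrite sub_capmx kerP_Bspace // /kerP capmxSr.
suff -> : \rank (Bspace dT Y t :&: kermx P)%MS = 0%N by rewrite mul1n.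
by apply/eqP; rewrite mxrank_eq0 -submx0 (submx_trans (capmxSl _ _)) ?Bspace_lt_delta.
Qed.

Lemma mxrank_kernel_persistence s t :
  (\rank (Kmod Kf s + Bmod Kf t)%MS + dim_kerVU dW X (t - delta) s
   = \rank (Bmod Kf t) + \rank (dieZ dW X s) + (t < delta)%R * \rank kerP)%N.
Proof.
have sumK : \rank (Kmod Kf s + Bmod Kf t)%MS
          = (\rank (dieZ dW X s + Bspace dW X (t - delta))%MS + \rank kerP)%N.
  rewrite (mxrank_ker_split (C := Cspace Y) (M := P)).
  - congr (_ + _)%N; apply/eqmx_rank/eqmxP.
    exact: eqmx_trans (addsmxMr _ _ _) (adds_eqmx (Kmod_chain s) (Bspace_chain t)).
  - exact: submx_trans (kerP_Kmod s) (addsmxSl _ _).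
  by rewrite addsmx_sub capmxSl Bspace_Cspace.
have sumB : \rank (Bmod Kf t) = (\rank (Bspace dW X (t - delta)) + \rank (Bspace dT Y t :&: kermx P))%N.
  by rewrite -(mxrank_mul_ker (Bspace dT Y t) P) (eqmx_rank (introT eqmxP (Bspace_chain t))).
have := mxrank_sum_cap (dieZ dW X s) (Bspace dW X (t - delta)).
rewrite rank_dieZ_cap sumK sumB; have := rank_Bspace_kerP t.
lia.
Qed.

(* The scales at which B(Z, s), B(X, s - delta) or [s < delta] may change. *)
Definition crit : seq R := [seq dW p.1 p.2 | p <- enum {: W * W}] ++
  [seq delta + dW p.1 p.2 | p <- enum {: W * W}] ++ [:: delta].

Lemma dW_in_crit x y : dW x y \in crit.
Proof. by rewrite mem_cat; apply/orP; left; apply/mapP; exists (x, y); rewrite ?mem_enum. Qed.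

Lemma delta_dW_in_crit x y : delta + dW x y \in crit.
Proof.
rewrite !mem_cat; apply/orP; right; apply/orP; left.
by apply/mapP; exists (x, y); rewrite ?mem_enum.
Qed.

Lemma delta_in_crit : delta \in crit.
Proof. by rewrite !mem_cat mem_head !orbT. Qed.

Lemma Bspace_stable c u : c <= u -> (forall z, z \in crit -> z <= u -> z <= c) ->
  [/\ (Bspace dW [set: W] u == Bspace dW [set: W] c)%MS,
      (Bspace dW X (u - delta) == Bspace dW X (c - delta))%MS & (u < delta) = (c < delta)].
Proof.
move=> cu gap; split.
- apply/andP; split; last exact: Bspace_le.
  by apply: Bspace_gap => x y _ _; apply: gap (dW_in_crit x y).
- apply/andP; split; last by apply: Bspace_le; lra.
  by apply: Bspace_gap => x y _ _ dxy; have := gap _ (delta_dW_in_crit x y); lra.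
case: (ltrP u delta) => ud; case: (ltrP c delta) => cd //; first lra.
by have := gap _ delta_in_crit; lra.
Qed.

Section Barcode.
Variables (J : finType) (bar : J -> interval R) (g : J -> R -> 'rV[F2]_#|T|).
Hypothesis decKf : is_interval_decomposition Kf bar g.

Lemma card_bars_over s t : 0 <= s -> s <= t ->
  (#|bars_over bar s t| + dim_kerVU dW X (t - delta) s
   = \rank (dieZ dW X s) + (t < delta)%R * \rank kerP)%N.
Proof.
move=> s0 st; have Bmod_le r r' : r <= r' -> (Bmod Kf r <= Bmod Kf r')%MS by apply: Bspace_le.
have := mxrank_kernel_persistence s t; rewrite (mxrank_persistence Bmod_le decKf s0 st).
by rewrite -!addnA => /addnI.
Qed.

Lemma bar_locally_constant j : locally_constant_right (bar j).
Proof.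
move=> c c0; have [t ct gap] := gap_above crit c; exists t => // u /andP[cu ut].
have [BW BX ltu] := Bspace_stable cu (fun z zc zu => gap z zc (le_trans zu ut)).
have BWc : (Bspace dW [set: W] c == Bspace dW [set: W] c)%MS by rewrite submx_refl.
have e_cu := card_bars_over c0 cu; have e_cc := card_bars_over c0 (lexx c).
have e_uu := card_bars_over (le_trans c0 cu) (lexx u).
rewrite (dim_kerVU_eq BX BWc) ltu in e_cu.
rewrite (dim_kerVU_eq BX BW) (rank_dieZ_eq X BW) ltu in e_uu.
by apply: bars_over_mem_eq; apply/eqP; rewrite -(eqn_add2r (dim_kerVU dW X (c - delta) c)) ?e_cu ?e_cc ?e_uu.
Qed.

Lemma bar_eventually_empty j : exists u0, forall u, u0 <= u -> u \notin bar j.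
Proof.
have [D D0 boundD] := finite_bounded (fun p : W * W => dW p.1 p.2).
exists (delta + D) => u uD; apply: bars_over_card0.
have u0 : 0 <= u by apply: le_trans (addr_ge0 (ltW delta_gt0) D0) uD.
have := card_bars_over u0 (lexx u); rewrite dim_kerVU_diam => [|x y _ _]; last first.
  by have := boundD (x, y); rewrite /=; lra.
by rewrite (_ : (u < delta) = false) ?mul0n ?addn0; [lia | apply/negbTE; rewrite -leNgt; lra].
Qed.

Lemma bar_shape j : exists c d, [/\ 0 <= c, c < d & bar j = `[c, d[].
Proof.
case: decKf => ok _ _ _ _.
exact: itv_co_shape (ok j) (bar_locally_constant j) (bar_eventually_empty j).
Qed.

Section Endpoints.
Variables (lb rb : J -> R).
Hypothesis lb_ge0 : forall j, 0 <= lb j.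
Hypothesis bar_co : forall j, bar j = `[lb j, rb j[.

Definition crit_bars := crit ++ [seq lb j | j <- enum J] ++ [seq rb j | j <- enum J].

Lemma crit_in_bars z : z \in crit -> z \in crit_bars.
Proof. by move=> zc; rewrite mem_cat zc. Qed.

Lemma lb_in_bars j : lb j \in crit_bars.
Proof. by rewrite !mem_cat (map_f lb) ?mem_enum ?orbT. Qed.

Lemma rb_in_bars j : rb j \in crit_bars.
Proof. by rewrite !mem_cat (map_f rb) ?mem_enum ?orbT. Qed.

Lemma bars_co_over_neg t : bars_co_over lb rb (-1) t = set0.
Proof. by apply/setP => j; rewrite !inE leNgt (lt_le_trans (ltrN10 R) (lb_ge0 j)). Qed.

Lemma bar_mult_kernel_zero d' d : 0 <= d' -> d' < d ->
  (forall z, z \in crit_bars -> (z <= d') || (d <= z)) ->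
  bar_mult bar `[0, d[ = ((d == delta) * \rank kerP)%N.
Proof.
move=> d'0 d'd gap; have d0 : 0 <= d by apply: le_trans d'0 (ltW d'd).
have lb_gap j : (lb j <= -1) || (0 <= lb j) by rewrite lb_ge0 orbT.
have := bars_incl_excl (ltrN10 R) d'd lb_gap (fun j => gap _ (rb_in_bars j)).
rewrite !bars_co_over_neg cards0 !addn0 -!(bars_over_co bar_co) // -(bar_mult_co bar_co).
have := card_bars_over (lexx 0) d'0; have := card_bars_over (lexx 0) d0.
rewrite !dim_kerVU_le0r // rank_dieZ_le0 // !addn0 !add0n => -> ->.
have := gap _ (crit_in_bars delta_in_crit).
case: (ltgtP d delta) => [d_delta|d_delta|d_delta] gap_delta.
- by rewrite (lt_trans d'd d_delta) /= mul0n mul1n -{2}[\rank kerP]add0n => /addIn.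
- by move: gap_delta; rewrite orbF => delta_d'; rewrite ltNge delta_d' /= mul0n addn0.
- by rewrite -d_delta d'd /= mul0n mul1n addn0.
Qed.

Lemma bar_mult_incl_excl c' c d' d : 0 <= c' -> c' < c -> c <= d' -> d' < d ->
  (forall z, z \in crit_bars -> (z <= c') || (c <= z)) ->
  (forall z, z \in crit_bars -> (z <= d') || (d <= z)) ->
  (bar_mult bar `[c, d[ + dim_kerVU dW X (d' - delta) c + dim_kerVU dW X (d - delta) c'
   = dim_kerVU dW X (d - delta) c + dim_kerVU dW X (d' - delta) c')%N.
Proof.
move=> c'0 c'c cd' d'd gapc gapd; have c0 := le_trans c'0 (ltW c'c).
have c'd' := le_trans (ltW c'c) cd'; have cd := ltW (le_lt_trans cd' d'd).
have c'd := le_trans c'd' (ltW d'd).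
have := bars_incl_excl c'c d'd (fun j => gapc _ (lb_in_bars j)) (fun j => gapd _ (rb_in_bars j)).
rewrite -!(bars_over_co bar_co) // -(bar_mult_co bar_co).
have : ((#|bars_over bar c d'| + dim_kerVU dW X (d' - delta)%R c)
        + (#|bars_over bar c' d| + dim_kerVU dW X (d - delta)%R c')
      = (#|bars_over bar c' d'| + dim_kerVU dW X (d' - delta)%R c')
        + (#|bars_over bar c d| + dim_kerVU dW X (d - delta)%R c))%N.
  rewrite (card_bars_over c0 cd') (card_bars_over c'0 c'd) (card_bars_over c'0 c'd').
  by rewrite (card_bars_over c0 cd) addnACA [RHS]addnACA (addnC (\rank (dieZ dW X c'))).
(* [lia] compares atoms syntactically: first merge the two convertible copies of the
   multiplicity. *)
move: (bar_mult _ _) => E; lia.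
Qed.

Lemma bar_mult_kernel_pos c' c d' d : 0 <= c' -> c' < c -> c <= d' -> d' < d ->
  (forall z, z \in crit_bars -> (z <= c') || (c <= z)) ->
  (forall z, z \in crit_bars -> (z <= d') || (d <= z)) ->
  bar_mult bar `[c, d[ = mult0 (PH0 dW X) (PH0 dW [set: W]) 1%:M (d - delta) c.
Proof.
move=> c'0 c'c cd' d'd gapc gapd.
have := bar_mult_incl_excl c'0 c'c cd' d'd gapc gapd.
have [d_delta|delta_d] := lerP d delta.
  have d'_delta : d' <= delta by lra.
  rewrite !dim_kerVU_le0l ?subr_le0 // !addn0 => ->; apply/esym/eqP.
  by rewrite -leqn0 leqNgt; apply/negP => /(mult0_gt0 dW_metric) [+ _ _]; lra.
have delta_d' : delta <= d'.
  by have := gapd _ (crit_in_bars delta_in_crit); rewrite [d <= _]leNgt delta_d orbF.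
have gapa x y : x \in X -> y \in X -> dW x y < d - delta -> dW x y <= d' - delta.
  by move=> _ _ dxy; have := gapd _ (crit_in_bars (delta_dW_in_crit x y)); case/orP; lra.
have gapb x y : dW x y < c -> dW x y <= c'.
  by move=> dxy; have := gapc _ (crit_in_bars (dW_in_crit x y)); case/orP; lra.
have a'0 : 0 <= d' - delta by lra.
have a'a : d' - delta < d - delta by lra.
rewrite -(mult0_incl_excl dW_metric a'0 a'a c'0 c'c gapa gapb) -!addnA.
exact: addIn.
Qed.

Lemma bar_mult_kernel c d : 0 <= c -> c < d ->
  bar_mult bar `[c, d[ = (mult0 (PH0 dW X) (PH0 dW [set: W]) 1%:M (d - delta)%R c
                          + ((c == 0%R) && (d == delta)) * \rank kerP)%N.
Proof.
move=> c0 cd; have [d' [cd' d'd gapd]] := gap_below crit_bars cd.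
have gap_d z : z \in crit_bars -> (z <= d') || (d <= z).
  by move=> zL; case: (ltrP z d) => zd; [rewrite gapd | rewrite orbT].
have [->|c_ne0] := eqVneq c 0.
  rewrite (bar_mult_kernel_zero (le_trans c0 cd') d'd gap_d) /=.
  suff -> : mult0 (PH0 dW X) (PH0 dW [set: W]) 1%:M (d - delta) 0 = 0%N by [].
  by apply/eqP; rewrite -leqn0 leqNgt; apply/negP => /(mult0_gt0 dW_metric) [_ + _]; rewrite ltxx.
have c_gt0 : 0 < c by rewrite lt_neqAle eq_sym c_ne0.
have [c' [c'0 c'c gapc]] := gap_below crit_bars c_gt0.
have gap_c z : z \in crit_bars -> (z <= c') || (c <= z).
  by move=> zL; case: (ltrP z c) => zc; [rewrite gapc | rewrite orbT].
by rewrite (bar_mult_kernel_pos c'0 c'c cd' d'd gap_c gap_d) /= mul0n addn0.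
Qed.

End Endpoints.

Lemma kernel_injection_property :
  injection_property (mult0 (PH0 dW X) (PH0 dW [set: W]) 1%:M) bar delta.
Proof.
have /choice[lb lbP] := bar_shape.
have /choice[rb rbP] : forall j, exists d, [/\ 0 <= lb j, lb j < d & bar j = `[lb j, d[] := lbP.
have lb_ge0 j : 0 <= lb j by case: (rbP j).
have bar_co j : bar j = `[lb j, rb j[ by case: (rbP j).
apply: (injection_property_of_bar_mult delta_gt0 bar_shape) => [a b|].
  by case/(mult0_gt0 dW_metric) => a0 b0 ba; split => //; apply: ltW.
exact: bar_mult_kernel lb_ge0 bar_co.
Qed.

End Barcode.
End ProjectionKernel.

Theorem proposition6p7 (R : realType)
  (Z Z' : finType) (dZ : Z -> Z -> R) (dZ' : Z' -> Z' -> R)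
  (X : {set Z}) (X' : {set Z'})
  (hZ : is_metric dZ) (hZ' : is_metric dZ')
  (eps : R) (heps : is_dGH_pair dZ X dZ' X' eps)
  (M : Type) (dM : M -> M -> R) (hM : is_metric dM)
  (gZ : Z -> M) (gZ' : Z' -> M)
  (hgZ : isometric_embedding dZ dM gZ) (hgZ' : isometric_embedding dZ' dM gZ')
  (hHX : hausdorff_le dM gZ X gZ' X' eps)
  (hHZ : hausdorff_le dM gZ [set: Z] gZ' [set: Z'] eps)
  (aZ : Z -> Z') (aZ' : Z' -> Z)
  (haX : forall x, x \in X -> aZ x \in X')
  (haX' : forall x', x' \in X' -> aZ' x' \in X)
  (haZ : forall z, dM (gZ z) (gZ' (aZ z)) <= eps)
  (haZ' : forall z', dM (gZ' z') (gZ (aZ' z')) <= eps)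
  (delta : R) (hdelta : 0 < delta) :
  let Y := Yset X X' aZ aZ' in
  let V := PH0 dZ X in
  let U := PH0 dZ [set: Z] in
  let V' := PH0 dZ' X' in
  let U' := PH0 dZ' [set: Z'] in
  (* f, f' induced by the inclusions X <= Z, X' <= Z' (identity on chains);
     f^delta = f o h, f^delta' = f' o h', h, h' induced by the projections *)
  let kerfd := kermod (PH0 (dYdelta dZ delta) Y) U (chainmx (@fst Z Z') *m 1%:M) in
  let kerfd' := kermod (PH0 (dYdelta' dZ' delta) Y) U' (chainmx (@snd Z Z') *m 1%:M) in
  (forall (J : finType) (bar : J -> interval R) g,
     is_interval_decomposition kerfd bar g ->
     injection_property (mult0 V U 1%:M) bar delta) /\
  (forall (J : finType) (bar : J -> interval R) g,
     is_interval_decomposition kerfd' bar g ->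
     injection_property (mult0 V' U' 1%:M) bar delta).
Proof.
move=> Y V U V' U' kerfd kerfd'.
have Y_fst y : y \in Y -> y.1 \in X by rewrite inE => /and3P[].
have Y_snd y : y \in Y -> y.2 \in X' by rewrite inE => /and3P[].
have fst_onto x : x \in X -> exists2 y, y \in Y & y.1 = x.
  by move=> xX; exists (x, aZ x); rewrite // inE /= xX haX ?eqxx.
have snd_onto x' : x' \in X' -> exists2 y, y \in Y & y.2 = x'.
  by move=> xX'; exists (aZ' x', x'); rewrite // inE /= xX' haX' ?eqxx ?orbT.
split=> J bar g.
  by apply: (kernel_injection_property hZ Y_fst fst_onto).
by apply: (kernel_injection_property hZ' Y_snd snd_onto).
Qed.
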